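(* Let $n$, $k$, $t$ be positive integers with $k\geq t+1$ and $n\geq 2k$, and let $V$ be an $n$-dimensional vector space over $\mathbb{F}_q$. Suppose $\mathcal{F}\subseteq{V\brack k}$ is almost $t$-intersecting and $\mathcal{B}\subseteq\mathcal{F}$. If $A$ is a $t$-cover of $\mathcal{F}\setminus\mathcal{B}$ with $\dim(A)<\tau_t(\mathcal{F})\leq k$, then there exists a subspace $A_u$ of $V$ with $A\subseteq A_u$, $\tau_t(\mathcal{F})\leq\dim(A_u)$ and $$|\mathcal{B}_A|\leq{k-t+1\brack 1}^{\dim(A_u)-\dim(A)}|\mathcal{B}_{A_u}|+\sum_{i=0}^{\tau_t(\mathcal{F})-\dim(A)-1}{k-t+1\brack 1}^{i}.$$
   Context: $q$ is a prime power; ${W\brack k}$ is the set of $k$-dimensional subspaces of $W$ and ${m\brack r}$ the Gaussian binomial coefficient $\prod_{i=0}^{r-1}\frac{q^{m-i}-1}{q^{r-i}-1}$. A family $\mathcal{F}\subseteq{V\brack k}$ is almost $t$-intersecting if for each $F\in\mathcal{F}$ there is at most one $F'\in\mathcal{F}$ with $\dim(F\cap F')<t$. A subspace $W$ is a $t$-cover of a family $\mathcal{A}$ if $\dim(W\cap F)\geq t$ for all $F\in\mathcal{A}$; $\tau_t(\mathcal{F})$ is the minimum dimension of a $t$-cover of $\mathcal{F}$. For a family $\mathcal{B}$ and subspace $A$, $\mathcal{B}_A=\{F\in\mathcal{B}: A\subseteq F\}$. *)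

From HB Require Import structures.
From mathcomp Require Import all_boot all_order all_algebra all_field.
From mathcomp Require Import finmap.
Set Implicit Arguments. Unset Strict Implicit. Unset Printing Implicit Defensive.
Import GRing.Theory.
Open Scope fset_scope.

Definition gauss_binom (q m r : nat) : nat :=
  (\prod_(i < r) (q ^ (m - i) - 1)) %/ (\prod_(i < r) (q ^ (r - i) - 1)).

Section Subspaces.
Variables (K : fieldType) (vT : vectType K).

Definition almost_t_intersecting (t : nat) (Fam : {fset {vspace vT}}) : Prop :=
  forall F, F \in Fam ->
    #|` [fset F' in Fam | (\dim (F :&: F')%VS < t)%N] | <= 1.

Definition t_cover (t : nat) (W : {vspace vT}) (A : {fset {vspace vT}}) : Prop :=
  forall F, F \in A -> (t <= \dim (W :&: F)%VS)%N.

Definition is_tau (t : nat) (Fam : {fset {vspace vT}}) (m : nat) : Prop :=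
  (exists W, t_cover t W Fam /\ \dim W = m) /\
  (forall W, t_cover t W Fam -> (m <= \dim W)%N).

Definition fam_containing (B : {fset {vspace vT}}) (A : {vspace vT}) :=
  [fset F in B | (A <= F)%VS].
End Subspaces.

From mathcomp Require Import all_boot all_order all_algebra all_field.
From mathcomp Require Import finmap zify.
Set Implicit Arguments. Unset Strict Implicit. Unset Printing Implicit Defensive.
Import GRing.Theory.
Open Scope fset_scope.

(* While dim A < tau, A is not a t-cover of Fam, so some F0 in Fam meets A in
   dimension < t, and F0 contains a subspace Y of dimension k-t+1 with
   A ∩ Y = 0.  Apart from the at most one member of Fam meeting F0 in
   dimension < t, every F in B_A meets F0 in dimension >= t, hence contains a
   nonzero y in Y and lies in B_(A + <y>).  Since such an F is counted by all
   q - 1 nonzero multiples of y, double counting over the q^(k-t+1) - 1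
   nonzero vectors of Y yields a y with
   |B_A| <= 1 + [k-t+1 brack 1] |B_(A + <y>)|.
   Iterating this one-dimensional enlargement of A up to dimension tau gives
   the geometric sum. *)

Lemma gauss_binom1 q m : (q - 1) * gauss_binom q m 1 = q ^ m - 1.
Proof.
rewrite /gauss_binom !big_ord1 !subn0 expn1 mulnC divnK //.
by rewrite !subn1 dvdn_pred_predX.
Qed.

Lemma leq_mul_card_sum_card (I : finType) (T : choiceType) (P : {pred I})
    (S : I -> {fset T}) (X : {fset T}) (s : nat) :
  (forall x, x \in X -> s <= #|[pred i in P | x \in S i]|) ->
  s * #|` X| <= \sum_(i in P) #|` S i|.
Proof.
move=> X_covered.
have mult_x x : x \in X -> s <= \sum_(i in P | x \in S i) 1.
  by move=> /X_covered; rewrite sum1_card.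
have card_S i : \sum_(x <- X | x \in S i) 1 <= #|` S i|.
  rewrite big_fset_condE -card_fset_sum1; apply: fsubset_leq_card.
  by apply/fsubsetP => x; rewrite !inE => /andP[].
rewrite card_fset_sum1 big_distrr /= big_seq.
under eq_bigr do rewrite muln1.
apply: leq_trans (@leq_sum _ X (mem X) _ _ mult_x) _.
rewrite (exchange_big_dep (fun i => i \in P)) /=; last by move=> x i _ /andP[].
apply: leq_sum => i iP; apply: leq_trans (card_S i).
by apply: eq_leq; rewrite [RHS]big_seq_cond; apply: eq_bigl => x; rewrite iP.
Qed.

Section HeavyLine.
Variables (K : finFieldType) (vT : vectType K) (T : choiceType).
Variables (Y : {vspace vT}) (S : vT -> {fset T}) (X : {fset T}).
Hypothesis dimY_gt0 : 0 < \dim Y.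
Hypothesis S_scale : forall (a : K) y, (a != 0)%R -> S y `<=` S (a *: y)%R.
Hypothesis X_covered :
  forall x, x \in X -> exists2 y, (y \in Y) && (y != 0)%R & x \in S y.

Lemma exists_heavy_line :
  exists2 y, (y \in Y) && (y != 0)%R &
    #|` X| <= gauss_binom #|K| (\dim Y) 1 * #|` S y|.
Proof.
set m := \dim Y.
(* vT need not be a finType, so the vectors of Y are enumerated through their
   coordinate rows. *)
pose comb (c : 'rV[K]_m) : vT := (\sum_i c ord0 i *: (vbasis Y)`_i)%R.
have comb_mem c : comb c \in Y.
  by apply: memv_suml => i _; rewrite memvZ // vbasis_mem // mem_nth ?size_tuple.
have combZ a c : comb (a *: c)%R = (a *: comb c)%R.
  by rewrite scaler_sumr; apply: eq_bigr => i _; rewrite mxE scalerA.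
have comb_eq0 c : (comb c == 0)%R = (c == 0)%R.
  apply/eqP/eqP => [c0 | ->]; last by rewrite /comb big1 // => i _; rewrite mxE scale0r.
  apply/rowP => j; rewrite mxE -(coord_sum_free (c ord0) j (basis_free (vbasisP Y))).
  by rewrite -/(comb c) c0 linear0.
have comb_onto y : y \in Y -> exists c, comb c = y.
  move=> /coord_vbasis yE; exists (\row_i coord (vbasis Y) i y)%R.
  by rewrite [RHS]yE; apply: eq_bigr => i _; rewrite mxE.
pose P := [pred c : 'rV[K]_m | c != 0%R].
have q_gt1 := card_finNzRing_gt1 K.
have cardP : #|P| = #|K| ^ m - 1.
  by rewrite cardC1 card_mx mul1n subn1.
have X_mult x : x \in X -> #|K| - 1 <= #|[pred c in P | x \in S (comb c)]|.
  move=> /X_covered [y /andP[yY y0] xSy]; have [c cy] := comb_onto y yY.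
  have c0 : c != 0%R by rewrite -comb_eq0 cy.
  rewrite subn1 -(cardsC1 (0 : K)%R) -(@card_in_imset _ _ (fun a => a *: c)%R).
    apply: subset_leq_card; apply/subsetP => _ /imsetP[a a0 ->].
    rewrite in_setC1 in a0; rewrite !inE scaler_eq0 negb_or a0 c0 combZ cy /=.
    exact: fsubsetP (S_scale y a0) x xSy.
  move=> a b _ _ /eqP; rewrite -subr_eq0 -scalerBl scaler_eq0 (negbTE c0) orbF.
  by rewrite subr_eq0 => /eqP.
have [c1 c1P] : exists c1, c1 \in P.
  apply/card_gt0P; rewrite cardP subn_gt0.
  by rewrite -(exp1n m) ltn_exp2r.
case: (arg_maxnP (fun c => #|` S (comb c)|) c1P) => cmax cmaxP cmax_max.
exists (comb cmax); first by rewrite comb_mem comb_eq0.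
have sum_le : \sum_(c in P) #|` S (comb c)| <= \sum_(c in P) #|` S (comb cmax)|.
  exact: leq_sum cmax_max.
have := leq_trans (leq_mul_card_sum_card X_mult) sum_le.
rewrite sum_nat_const cardP -gauss_binom1 -mulnA leq_pmul2l //.
by rewrite subn_gt0.
Qed.
End HeavyLine.

Section Subspaces.
Variables (K : fieldType) (vT : vectType K).

Lemma exists_subv_dim (U : {vspace vT}) m :
  m <= \dim U -> exists2 Y : {vspace vT}, (Y <= U)%VS & \dim Y = m.
Proof.
move=> m_le; pose X := take m (vbasis U).
have freeX : free X.
  by move: (basis_free (vbasisP U)); rewrite -(cat_take_drop m (vbasis U)) => /catl_free.
exists <<X>>%VS; first by apply/span_subvP => v /mem_take/vbasis_mem.
by rewrite (eqP freeX) size_takel // size_tuple.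
Qed.

Lemma dimv_cap_gt0 (U W V : {vspace vT}) :
  (U + W <= V)%VS -> \dim V < \dim U + \dim W -> 0 < \dim (U :&: W).
Proof. by move=> /dimvS; rewrite -dimv_sum_cap; lia. Qed.

End Subspaces.

Section CoverStep.
Variables (K : finFieldType) (vT : vectType K) (k t : nat).
Variables (Fam B : {fset {vspace vT}}).
Hypothesis dimFam : forall F, F \in Fam -> \dim F = k.
Hypothesis almostFam : almost_t_intersecting t Fam.
Hypothesis subBFam : B `<=` Fam.
Hypothesis t_le_k : t <= k.

Local Notation c := (gauss_binom #|K| (k - t + 1) 1).

Lemma fam_containing_step (A F0 : {vspace vT}) :
  F0 \in Fam -> \dim (A :&: F0) < t ->
  exists A' : {vspace vT}, [/\ (A <= A')%VS, \dim A' = (\dim A).+1 &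
    #|` fam_containing B A| <= 1 + c * #|` fam_containing B A'|].
Proof.
move=> F0_Fam AF0_lt; have dimF0 := dimFam F0_Fam.
have [Y Y_sub dimY] : exists2 Y : {vspace vT}, (Y <= F0 :\: A)%VS & \dim Y = (k - t + 1)%N.
  by apply: exists_subv_dim; have := dimv_cap_compl F0 A; rewrite capvC in AF0_lt; lia.
have YF0 : (Y <= F0)%VS := subv_trans Y_sub (diffvSl F0 A).
have AY0 : (A :&: Y <= 0)%VS.
  by rewrite -(capv_diff F0 A) capvC capvS.
pose E := [fset F in Fam | \dim (F0 :&: F) < t].
have S_scale (a : K) y : (a != 0)%R ->
    fam_containing B (A + <[y]>) `<=` fam_containing B (A + <[(a *: y)%R]>).
  move=> a0; apply/fsubsetP => F; rewrite !inE !subv_add -!memvE.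
  by case/and3P=> -> -> /(memvZ a).
have X_covered F : F \in fam_containing B A `\` E ->
    exists2 y, (y \in Y) && (y != 0)%R & F \in fam_containing B (A + <[y]>).
  rewrite !inE => /andP[F_E /andP[F_B AF]].
  have F0F_ge : t <= \dim (F0 :&: F).
    by move: F_E; rewrite (fsubsetP subBFam F F_B) -leqNgt.
  have : 0 < \dim (F0 :&: F :&: Y).
    by apply: (dimv_cap_gt0 (V := F0)); [rewrite subv_add capvSl | rewrite dimF0 dimY; lia].
  rewrite lt0n dimv_eq0 -vpick0 => y0; exists (vpick (F0 :&: F :&: Y)).
    by have := memv_pick (F0 :&: F :&: Y); rewrite memv_cap => /andP[_ ->].
  have := memv_pick (F0 :&: F :&: Y); rewrite !memv_cap => /andP[/andP[_ yF] _].
  by rewrite !inE F_B subv_add AF -memvE yF.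
have dimY_gt0 : 0 < \dim Y by rewrite dimY addn1.
have [y /andP[yY y0] heavy] := exists_heavy_line dimY_gt0 S_scale X_covered.
exists (A + <[y]>)%VS; split; first exact: addvSl.
  rewrite dimv_disjoint_sum ?dim_vline ?y0 ?addn1 //.
  by apply/eqP; rewrite -subv0 (subv_trans _ AY0) // capvS // -memvE.
rewrite -(cardfsID E (fam_containing B A)) leq_add -?dimY //.
exact: leq_trans (fsubset_leq_card (fsubsetIr _ _)) (almostFam F0_Fam).
Qed.

Lemma fam_containing_bound tau : is_tau t Fam tau ->
  forall A : {vspace vT}, t_cover t A (Fam `\` B) ->
  exists Au : {vspace vT},
    (A <= Au)%VS /\ tau <= \dim Au /\
    (#|` fam_containing B A| <=
       c ^ (\dim Au - \dim A) * #|` fam_containing B Au|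
       + \sum_(0 <= i < tau - \dim A) c ^ i)%N.
Proof.
move=> [_ tau_min] A; have [d] := ubnP (tau - \dim A).
elim: d A => // d IH A tauA_lt coverA.
have [tau_le | dimA_lt] := leqP tau (\dim A).
  exists A; split; [exact: subvv | split => //].
  by rewrite subnn expn0 mul1n big_geq ?addn0 // leqn0 subn_eq0.
have /allPn[F0 F0_Fam] : ~~ all (fun F => t <= \dim (A :&: F)) Fam.
  by apply: contraL dimA_lt => /allP coverFam; rewrite -leqNgt; exact: tau_min.
rewrite -ltnNge => AF0_lt.
have [A' [AA' dimA' stepA]] := fam_containing_step F0_Fam AF0_lt.
have coverA' : t_cover t A' (Fam `\` B).
  by move=> F /coverA /leq_trans; apply; apply/dimvS/capvS.
have [|Au [A'Au [tau_le boundA']]] := IH A' _ coverA'; first lia.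
exists Au; split; [exact: subv_trans AA' A'Au | split => //].
have dimAu := dimvS A'Au.
rewrite (_ : \dim Au - \dim A = (\dim Au - \dim A').+1)%N; last lia.
rewrite (_ : tau - \dim A = (tau - \dim A').+1)%N; last lia.
rewrite big_nat_recl // expn0 expnS -mulnA.
under eq_bigr do rewrite expnS.
rewrite -big_distrr /=.
apply: leq_trans stepA _; rewrite addnCA leq_add2l -mulnDr.
exact: leq_mul (leqnn c) boundA'.
Qed.

End CoverStep.

Theorem proposition3p3 (K : finFieldType) (q : nat) (vT : vectType K)
    (n k t : nat) (Fam B : {fset {vspace vT}}) (A : {vspace vT}) (tau : nat) :
  #|K| = q -> \dim (@fullv K vT) = n ->
  (0 < t)%N -> (t + 1 <= k)%N -> (2 * k <= n)%N ->
  (forall F, F \in Fam -> \dim F = k) ->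
  almost_t_intersecting t Fam ->
  B `<=` Fam ->
  t_cover t A (Fam `\` B) ->
  is_tau t Fam tau ->
  (\dim A < tau)%N -> (tau <= k)%N ->
  exists Au : {vspace vT},
    (A <= Au)%VS /\ (tau <= \dim Au)%N /\
    (#|` fam_containing B A| <=
       (gauss_binom q (k - t + 1) 1) ^ (\dim Au - \dim A) * #|` fam_containing B Au|
       + \sum_(0 <= i < tau - \dim A) (gauss_binom q (k - t + 1) 1) ^ i)%N.
Proof.
move=> <- _ _ tk _ dimFam almostFam subBFam coverA tauP _ _.
have t_le_k : (t <= k)%N by apply: ltnW; rewrite -addn1.
exact: (fam_containing_bound dimFam almostFam subBFam t_le_k tauP coverA).
Qed.
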